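(* If $n$ is a positive integer, then $$\sum_{k = 1}^n \sum_{j = 0}^{k - 1} ( - 1)^{n - j} \frac{( n - j - 1)!}{n - j + 1}\left\{ {n \atop n - j} \right\} = B_n .$$
   Context: $\left\{ {n \atop m} \right\}$ denotes the Stirling number of the second kind. $B_n$ are the Bernoulli numbers, defined by $\frac{t}{e^t-1}=\sum_{n\ge0}B_n\frac{t^n}{n!}$ (so $B_1=-1/2$). *)

From mathcomp Require Import all_boot all_order all_algebra.
Set Implicit Arguments. Unset Strict Implicit. Unset Printing Implicit Defensive.
Import Order.TTheory GRing.Theory Num.Theory.
Local Open Scope ring_scope.

Fixpoint stirling2 (n k : nat) : nat :=
  match n, k with
  | 0, 0 => 1
  | 0, _.+1 => 0
  | _.+1, 0 => 0
  | n'.+1, k'.+1 => (k'.+1 * stirling2 n' k + stirling2 n' k')%N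
  end.

(* Bernoulli numbers B_n with t/(e^t-1) = sum_n B_n t^n/n!  (so B_1 = -1/2).
   Comparing coefficients of t^n in ((e^t-1)/t) * (sum_m B_m t^m/m!) = 1 gives
   sum_{m<=n} C(n+1,m) B_m = [n = 0], i.e. B_0 = 1 and
   B_n = -1/(n+1) * sum_{m<n} C(n+1,m) B_m for n >= 1.
   bern_list n = [:: B_0; ...; B_n]. *)
Fixpoint bern_list (n : nat) : seq rat :=
  match n with
  | 0 => [:: 1]
  | n'.+1 =>
      let s := bern_list n' in
      rcons s (- (n'.+2%:R)^-1 * \sum_(m < n'.+1) ('C(n'.+2, m))%:R * s`_m)
  end.

Definition bernoulli (n : nat) : rat := (bern_list n)`_n.

From mathcomp Require Import all_boot all_order all_algebra.
From mathcomp Require Import ring.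
Import GRing.Theory Num.Theory.

(* Summing over k first counts the j-th term n - j times, so with m = n - j the
   left-hand side is b_n = sum_m (-1)^m m!/(m+1) S(n,m).  This sequence satisfies
   the recurrence sum_(k <= n) C(n+1,k) b_k = [n = 0] that determines the
   Bernoulli numbers: exchanging the sums and using
   sum_(k <= n) C(n+1,k) S(k,m) = (m+1) S(n+1,m+1) turns it into
   sum_m (-1)^m m! S(n+1,m+1), which telescopes by the recurrence of S down to
   S(n,0) = [n = 0]. *)

Lemma stirling2_small k m : (k < m)%N -> stirling2 k m = 0%N.
Proof.
elim: k m => [|k IH] [|m] //=; rewrite ltnS => lt_k_m.
by rewrite !IH ?muln0 // leqW.
Qed.

Lemma stirling2SS n m :
  stirling2 n.+1 m.+1 = (m.+1 * stirling2 n m.+1 + stirling2 n m)%N.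
Proof. by []. Qed.

Lemma sum_binS (F : nat -> nat) n :
  (\sum_(k < n.+2) 'C(n.+1, k) * F k
   = \sum_(k < n.+1) 'C(n, k) * F k + \sum_(k < n.+1) 'C(n, k) * F k.+1)%N.
Proof.
rewrite big_ord_recl bin0 mul1n.
under eq_bigr => k _ do rewrite binS mulnDl.
rewrite big_split /= addnA [in RHS]big_ord_recl bin0 mul1n.
by rewrite big_ord_recr /= bin_small // mul0n addn0.
Qed.

Lemma sum_bin_stirling2 n m :
  (\sum_(k < n.+1) 'C(n, k) * stirling2 k m)%N = stirling2 n.+1 m.+1.
Proof.
elim: n m => [|n IH] m.
  by rewrite big_ord_recl big_ord0 /= muln0 !add0n addn0 mul1n.
rewrite (sum_binS (stirling2^~ m)) IH; case: m => [|m].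
  rewrite big1 ?addn0 => [|k _]; last by rewrite muln0.
  by rewrite [in RHS]/= mul1n addn0.
rewrite [RHS]stirling2SS mulSn -addnA; congr (_ + _).
under eq_bigr => k _ do rewrite (stirling2SS k) mulnDr mulnCA.
by rewrite big_split -big_distrr !IH.
Qed.

Lemma sum_bin_stirling2_lt n m :
  (\sum_(k < n.+1) 'C(n.+1, k) * stirling2 k m)%N
  = (m.+1 * stirling2 n.+1 m.+1)%N.
Proof.
have := sum_bin_stirling2 n.+1 m.
rewrite big_ord_recr binn mul1n [RHS]stirling2SS => /eqP.
by rewrite eqn_add2r => /eqP.
Qed.

Local Open Scope ring_scope.

Lemma sum_stirling2_widen {R : pzSemiRingType} (F : nat -> R) {n N : nat} :
  (n < N)%N ->
  \sum_(m < n.+1) F m * (stirling2 n m)%:R = \sum_(m < N) F m * (stirling2 n m)%:R.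
Proof.
move=> ltnN; rewrite (big_ord_widen N (fun m => F m * (stirling2 n m)%:R) ltnN).
rewrite big_mkcond; apply: eq_bigr => m _.
by case: ltnP => // lt_n_m; rewrite stirling2_small // mulr0.
Qed.

Lemma sum_alt_fact_stirling2 (R : comPzRingType) {n N : nat} : (n < N)%N ->
  \sum_(m < N) (-1) ^+ m * (m`!)%:R * (stirling2 n.+1 m.+1)%:R = (n == 0)%:R :> R.
Proof.
move=> ltnN.
rewrite -(big_mkord xpredT (fun m => (-1) ^+ m * (m`!)%:R * (stirling2 n.+1 m.+1)%:R)).
rewrite (telescope_sumr_eq (fun m => (-1) ^+ m.+1 * (m`!)%:R * (stirling2 n m)%:R)) //.
  rewrite stirling2_small // mulr0 sub0r fact0 expr1 mulN1r mulNr opprK mul1r.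
  by case: n {ltnN}.
by move=> m _; rewrite stirling2SS natrD natrM factS natrM !exprS; ring.
Qed.

Lemma size_bern_list n : size (bern_list n) = n.+1.
Proof. by elim: n => //= n IH; rewrite size_rcons IH. Qed.

Lemma nth_bern_list n m : (m <= n)%N -> (bern_list n)`_m = bernoulli m.
Proof.
elim: n => [|n IH]; first by rewrite leqn0 => /eqP ->.
rewrite leq_eqVlt => /predU1P[-> //|]; rewrite ltnS => le_m_n.
by rewrite /= nth_rcons size_bern_list ltnS le_m_n IH.
Qed.

Lemma bernoulliS n :
  bernoulli n.+1 = - (n.+2%:R)^-1 * \sum_(m < n.+1) 'C(n.+2, m)%:R * bernoulli m.
Proof.
rewrite /bernoulli /= nth_rcons size_bern_list ltnn eqxx; congr (_ * _).
by apply: eq_bigr => m _; rewrite nth_bern_list // -ltnS.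
Qed.

Lemma eq_bernoulli (b : nat -> rat) :
  (forall n, \sum_(k < n.+1) 'C(n.+1, k)%:R * b k = (n == 0)%:R) ->
  forall n, b n = bernoulli n.
Proof.
move=> b_rec; elim/ltn_ind => -[_|n IH].
  by have := b_rec 0; rewrite big_ord1 mul1r.
have := b_rec n.+1; rewrite big_ord_recr /= binSn => b_recS.
have n2_neq0 : n.+2%:R != 0 :> rat by rewrite pnatr_eq0.
rewrite bernoulliS; apply: (mulfI n2_neq0); rewrite mulrA mulrN mulfV // mulN1r.
apply/eqP; rewrite -addr_eq0 addrC -[X in _ == X]b_recS; apply/eqP.
by congr (_ + _); apply: eq_bigr => k _; rewrite IH.
Qed.

Definition bernoulli_stirling n : rat :=
  \sum_(m < n.+1) (-1) ^+ m * (m`!)%:R / (m.+1)%:R * (stirling2 n m)%:R.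

Lemma sum_bin_bernoulli_stirling n :
  \sum_(k < n.+1) 'C(n.+1, k)%:R * bernoulli_stirling k = (n == 0)%:R.
Proof.
under eq_bigr => k _.
  have lt_k_n2 : (k < n.+2)%N by rewrite leqW.
  rewrite /bernoulli_stirling.
  rewrite (sum_stirling2_widen (fun m => (-1) ^+ m * (m`!)%:R / (m.+1)%:R) lt_k_n2).
  rewrite big_distrr /=; under eq_bigr => m _ do rewrite mulrCA -natrM.
  over.
rewrite exchange_big /= -(sum_alt_fact_stirling2 _ (leqnSn n.+1)).
apply: eq_bigr => m _; rewrite -big_distrr /= -natr_sum sum_bin_stirling2_lt.
by rewrite natrM mulrA divfK // pnatr_eq0.
Qed.

Lemma sum_triangle (V : nmodType) (g : nat -> V) K :
  \sum_(1 <= k < K.+1) \sum_(0 <= j < k) g j = \sum_(0 <= j < K) g j *+ (K - j).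
Proof.
elim: K => [|K IH]; first by rewrite !big_geq.
rewrite big_nat_recr //= IH [RHS]big_nat_recr //= subSnn mulr1n.
rewrite [X in _ + X]big_nat_recr //= addrA -big_split /=; congr (_ + _).
by apply: eq_big_nat => j /andP[_ ltjK]; rewrite subSn ?mulrSr // ltnW.
Qed.

Theorem proposition6 (n : nat) (hn : (0 < n)%N) :
  \sum_(1 <= k < n.+1) \sum_(0 <= j < k)
     (-1) ^+ (n - j) * ((n - j - 1)`!)%:R / ((n - j + 1)%N)%:R
       * (stirling2 n (n - j))%:R
  = bernoulli n :> rat.
Proof.
rewrite sum_triangle -(eq_bernoulli _ sum_bin_bernoulli_stirling) /bernoulli_stirling.
case: n hn => // n _.
rewrite big_ord_recl [stirling2 _ 0]/= mulr0 add0r big_nat_rev big_mkord.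
apply: eq_bigr => i _; rewrite lift0 add0n subKn // subn1 succnK addn1.
by rewrite -[_ *+ i.+1]mulr_natr factS natrM; ring.
Qed.
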